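(* Let $V\in(\mathbb{R}\cup\{-\infty\})^{n\times p}$ have no row and no column identically equal to $-\infty$, and let $T=T_V:(\mathbb{R}\cup\{-\infty\})^n\to(\mathbb{R}\cup\{-\infty\})^n$ be the operator $$T_i(x)=\inf_{k\in[p],\,(i,k)\in E}\Big[-V_{ik}+\max_{j\in[n],\,j\neq i}(V_{jk}+x_j)\Big],\qquad i\in[n],$$ where $E=\{(i,k)\in[n]\times[p]: V_{ik}\neq-\infty\}$. Then $\rho(T)\le 0$ and $$-\rho(T)=\operatorname{inrad}(\operatorname{Col}(V)).$$ Moreover, if $\rho(T)$ is finite, then for any vector $a\in\mathbb{R}^n$ such that $T(a)\le \rho(T)+a$, the Hilbert ball $B(-a,-\rho(T))$ is included in $\operatorname{Col}(V)\cap\mathbb{R}^n$ and has maximal radius among Hilbert balls centered at a point of $\mathbb{R}^n$ and included in $\operatorname{Col}(V)$.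
   Context: Write $\mathbb{R}_{\max}=\mathbb{R}\cup\{-\infty\}$, with conventions $-\infty+c=-\infty$ for $c\in\mathbb{R}_{\max}$ and the maximum of an empty family equal to $-\infty$; $\bot$ denotes the identically $-\infty$ vector, and $\lambda+x$ denotes the vector $(\lambda+x_i)_i$. For a matrix $V$, $\operatorname{Col}(V)=\{Vx: x\in\mathbb{R}_{\max}^p\}$ with $(Vx)_i=\max_{k}(V_{ik}+x_k)$ (the tropical column span). Hilbert's projective metric on $\mathbb{R}_{\max}^n$: for $x,y$ not both $\bot$, $d(x,y)=\inf\{\lambda-\mu:\lambda,\mu\in\mathbb{R},\ \mu+y_i\le x_i\le\lambda+y_i\ \forall i\}\in[0,+\infty]$, and $d(\bot,\bot)=0$. For $a\in\mathbb{R}^n$ and $r\in[0,+\infty]$, $B(a,r)=\{x\in\mathbb{R}_{\max}^n: d(a,x)\le r\}$. The inner radius $\operatorname{inrad}(\mathcal{C})$ of a set $\mathcal{C}\subset\mathbb{R}_{\max}^n$ is the supremum of the radii $r$ of Hilbert balls $B(a,r)$ with $a\in\mathbb{R}^n$ included in the tropical cone generated by $\mathcal C$ (for $\mathcal C=\operatorname{Col}(V)$, included in $\operatorname{Col}(V)$). For an order-preserving, continuous map $T:\mathbb{R}_{\max}^n\to\mathbb{R}_{\max}^n$ commuting with addition of constants, $\rho(T)=\sup\{\lambda\in\mathbb{R}\cup\{-\infty\}: \exists u\in\mathbb{R}_{\max}^n,\ u\neq\bot,\ T(u)=\lambda+u\}$. *)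

From HB Require Import structures.
From mathcomp Require Import all_boot all_order all_algebra.
From mathcomp Require Import all_classical all_reals.
From mathcomp Require Import ereal.
Set Implicit Arguments. Unset Strict Implicit. Unset Printing Implicit Defensive.
Import Order.TTheory GRing.Theory Num.Theory.
Local Open Scope classical_set_scope.
Local Open Scope ereal_scope.

(* R_max = R ∪ {-oo} is modelled inside \bar R as the elements different
   from +oo.  A vector of R_max^n is a map 'I_n -> \bar R with no +oo entry. *)
Section TropDefs.
Variable R : realType.

Definition rmax_vec (n : nat) (x : 'I_n -> \bar R) : Prop :=
  forall i, x i != +oo.

Definition botv (n : nat) : 'I_n -> \bar R := fun _ => -oo.

Definition fin_vecs (n : nat) : set ('I_n -> \bar R) :=
  [set x | forall i, x i \is a fin_num].

Definition embv (n : nat) (a : 'I_n -> R) : 'I_n -> \bar R :=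
  fun i => (a i)%:E.

Definition tmulv (n p : nat) (V : 'I_n -> 'I_p -> \bar R) (x : 'I_p -> \bar R)
  : 'I_n -> \bar R :=
  fun i => \big[maxe/-oo]_(k < p) (V i k + x k).

Definition colspan (n p : nat) (V : 'I_n -> 'I_p -> \bar R)
  : set ('I_n -> \bar R) :=
  [set y | exists x : 'I_p -> \bar R, rmax_vec x /\ y = tmulv V x].

Definition T_op (n p : nat) (V : 'I_n -> 'I_p -> \bar R) (x : 'I_n -> \bar R)
  : 'I_n -> \bar R :=
  fun i => ereal_inf
    [set (- V i k + \big[maxe/-oo]_(j < n | j != i) (V j k + x j))
       | k in [set k : 'I_p | V i k != -oo]].

(* Hilbert's projective metric (inf of the empty set is +oo) *)
Definition hilbert_d (n : nat) (x y : 'I_n -> \bar R) : \bar R :=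
  if `[< x = @botv n /\ y = @botv n >] then 0
  else ereal_inf [set e : \bar R | exists l m : R, e = (l - m)%:E /\
          forall i, m%:E + y i <= x i /\ x i <= l%:E + y i].

Definition hball (n : nat) (a : 'I_n -> R) (r : \bar R) : set ('I_n -> \bar R) :=
  [set x | rmax_vec x /\ hilbert_d (embv a) x <= r].

Definition inrad_col (n p : nat) (V : 'I_n -> 'I_p -> \bar R) : \bar R :=
  ereal_sup [set r : \bar R | 0 <= r /\
     exists a : 'I_n -> R, hball a r `<=` colspan V].

Definition rho (n : nat) (T : ('I_n -> \bar R) -> ('I_n -> \bar R)) : \bar R :=
  ereal_sup [set l : \bar R | l != +oo /\
     exists u : 'I_n -> \bar R, rmax_vec u /\ u <> @botv n /\
       T u = (fun i => l + u i)].

End TropDefs.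

(* The Collatz-Wielandt number cw(T) = inf {l | exists a in R^n, T a <= l + a}
   connects both sides.  A ball B(b, r) inside Col(V) gives T(-b) <= -b - r, by
   testing the point of the ball raised by r at coordinate i; conversely
   T a <= a - r puts B(-a, r) inside Col(V), the residuated vector
   y_k = min_i (x_i - V_ik) witnessing membership of each point x.  Hence
   inrad = -cw.  An eigenvector is dominated by a translate of any
   super-eigenvector, so rho <= cw.  Conversely, cw is attained: T is a minimum
   over finitely many policies of max-plus linear maps, and for one policy,
   approximate potentials give an exact one by Fourier-Motzkin elimination.
   The decreasing orbit of max(T - cw, id - 1) from an optimal super-eigenvector
   then converges to an eigenvector for cw, which is not identically -oo: else
   some M points of the orbit, staggered by 1/M and minimized, would form a
   super-eigenvector for cw - 1/M. *)

From HB Require Import structures.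
From mathcomp Require Import all_boot all_order all_algebra.
From mathcomp Require Import all_classical all_reals.
From mathcomp Require Import ereal lra.
Import Order.TTheory GRing.Theory Num.Theory.
Local Open Scope classical_set_scope.
Local Open Scope ereal_scope.
Set Implicit Arguments. Unset Strict Implicit. Unset Printing Implicit Defensive.

Section DifferenceConstraints.
Variables (R : realFieldType) (T : eqType).
Local Open Scope ring_scope.
Implicit Types (e : R) (a : T -> R) (cs : seq (T * T * R)).

(* The triple (i, j, w) stands for the difference constraint w + a j <= a i. *)
Definition dc_sat e a (c : T * T * R) : bool := c.2 + a c.1.2 <= e + a c.1.1.

Definition dc_within (vs : seq T) cs :=
  all (fun c => (c.1.1 \in vs) && (c.1.2 \in vs)) cs.

Definition dc_elim (v : T) cs : seq (T * T * R) :=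
  [seq c <- cs | (c.1.1 != v) && (c.1.2 != v)] ++
  [seq (c.1.1, d.1.2, c.2 + d.2)
     | c <- [seq c <- cs | (c.1.1 != v) && (c.1.2 == v)],
       d <- [seq d <- cs | (d.1.1 == v) && (d.1.2 != v)]].

Lemma dc_satW e e' a c : e <= e' -> dc_sat e a c -> dc_sat e' a c.
Proof. by rewrite /dc_sat => ee' /le_trans; apply; rewrite lerD2r. Qed.

Lemma dc_elim_sat e a v cs :
  0 <= e -> all (dc_sat e a) cs -> all (dc_sat (e + e) a) (dc_elim v cs).
Proof.
move=> e0 /allP sat_cs; rewrite all_cat; apply/andP; split.
  apply/allP => c; rewrite mem_filter => /andP[_ /sat_cs]; apply: dc_satW.
  by rewrite lerDr.
apply/all_allpairsP => c d; rewrite !mem_filter.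
move=> /andP[/andP[_ /eqP cv] /sat_cs +] /andP[/andP[/eqP dv _] /sat_cs].
by rewrite /dc_sat /= cv dv; lra.
Qed.

Lemma dc_elim_within v vs cs :
  dc_within (v :: vs) cs -> dc_within vs (dc_elim v cs).
Proof.
move=> /allP cs_in; rewrite /dc_within all_cat; apply/andP; split.
  apply/allP => c; rewrite mem_filter => /andP[/andP[c1 c2] /cs_in].
  by rewrite !in_cons (negbTE c1) (negbTE c2).
apply/all_allpairsP => c d; rewrite !mem_filter /=.
move=> /andP[/andP[c1 _] /cs_in /andP[+ _]] /andP[/andP[_ d2] /cs_in /andP[_ +]].
by rewrite !in_cons (negbTE c1) (negbTE d2) /= => -> ->.
Qed.

Lemma dc_loop_le0 v w cs : (v, v, w) \in cs ->
  (forall e, 0 < e -> exists a, all (dc_sat e a) cs) -> w <= 0.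
Proof.
move=> vv approx; apply/ler_addgt0Pr => e /approx[a /allP /(_ _ vv)].
by rewrite /dc_sat /=; lra.
Qed.

Lemma dc_elim_extend v cs a :
  (forall w, (v, v, w) \in cs -> w <= 0) -> all (dc_sat 0 a) (dc_elim v cs) ->
  exists a', all (dc_sat 0 a') cs.
Proof.
move=> loops /allP sat_elim.
pose into_v (c : T * T * R) := (c.1.1 != v) && (c.1.2 == v).
pose from_v (d : T * T * R) := (d.1.1 == v) && (d.1.2 != v).
(* Any value between the lower bounds coming from the constraints (v, j, w)
   and the upper bounds coming from the constraints (i, v, w) will do. *)
pose lo := \big[Num.max/0]_(d <- cs | from_v d) (d.2 + a d.1.2).
pose t := \big[Num.min/lo]_(c <- cs | into_v c) (a c.1.1 - c.2).
exists (fun k => if k == v then t else a k); apply/allP => -[[i j] w] cin.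
rewrite /dc_sat /=; have [iv|iv] := eqVneq i v; have [jv|jv] := eqVneq j v.
- by subst i j; have := loops w cin; lra.
- subst i; rewrite add0r /t big_seq_cond.
  apply: le_bigmin => [|c /andP[cs_c /andP[c1 /eqP c2]]].
    by apply: le_bigmax_seq cin _; rewrite /from_v /= eqxx.
  have /sat_elim : (c.1.1, j, c.2 + w) \in dc_elim v cs.
    rewrite mem_cat; apply/orP; right.
    apply: (allpairs_f (fun c d : T * T * R => (c.1.1, d.1.2, c.2 + d.2))
              (x := c) (y := (v, j, w))).
      by rewrite mem_filter c1 c2 eqxx cs_c.
    by rewrite mem_filter eqxx jv cin.
  by rewrite /dc_sat /=; lra.
- subst j; rewrite add0r; suff : t <= a i - w by lra.
  by apply: bigmin_inf_seq cin _ _; rewrite /into_v /= ?iv ?eqxx.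
- have /sat_elim : (i, j, w) \in dc_elim v cs by rewrite mem_cat mem_filter iv jv cin.
  by rewrite /dc_sat /=.
Qed.

Lemma dc_feasible vs cs : dc_within vs cs ->
  (forall e, 0 < e -> exists a, all (dc_sat e a) cs) ->
  exists a, all (dc_sat 0 a) cs.
Proof.
elim: vs cs => [|v vs IH] cs cs_in approx.
  by exists (fun=> 0); apply: sub_all cs_in => c; rewrite in_nil.
have approx_elim e : 0 < e -> exists a, all (dc_sat e a) (dc_elim v cs).
  move=> e0; have /approx[a sat_a] : 0 < e / 2 by rewrite divr_gt0.
  by exists a; rewrite [e]splitr; apply: dc_elim_sat => //; lra.
have [a sat_a] := IH _ (dc_elim_within cs_in) approx_elim.
by apply: dc_elim_extend sat_a => w vv; apply: dc_loop_le0 vv approx.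
Qed.
End DifferenceConstraints.

Lemma fin_uniform_witness (R : realFieldType) (I : finType) (P : I -> R -> Prop) :
  (forall i e e', (0 < e <= e')%R -> P i e -> P i e') ->
  (forall e, (0 < e)%R -> exists i, P i e) -> exists i, forall e, (0 < e)%R -> P i e.
Proof.
move=> P_up approx; apply: contrapT => no_uniform.
have [bad bad_spec] : {bad : I -> R & forall i, (0 < bad i)%R /\ ~ P i (bad i)}.
  apply: (@choice _ _ (fun i e => (0 < e)%R /\ ~ P i e)) => i.
  have /existsNP[e] : ~ forall e, (0 < e)%R -> P i e.
    by move=> Pi; apply: no_uniform; exists i.
  by move=> /not_implyP[e0 nPe]; exists e.
pose e := \big[Num.min/1%R]_i bad i.
have e0 : (0 < e)%R by apply/bigmin_gtP; split => // i _; case: (bad_spec i).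
have [i Pie] := approx e e0; case: (bad_spec i) => _; apply.
by apply: P_up Pie; rewrite e0 bigmin_le.
Qed.

Section HilbertMetric.
Variables (R : realType) (n : nat).
Implicit Types (a : 'I_n -> R) (r : R).

Lemma hilbert_d_le_fin a (x : 'I_n -> \bar R) r : rmax_vec x ->
  hilbert_d (embv a) x <= r%:E ->
  exists2 x' : 'I_n -> R, x = embv x' & forall i j, ((x' i - a i) - (x' j - a j) <= r)%R.
Proof.
move=> x_noy; rewrite /hilbert_d; case: asboolP => [[a_bot _] _|_ dax].
  have no_i (i : 'I_n) : False by have := congr1 (@^~ i) a_bot.
  by exists (fun=> 0%R) => [|i]; [apply: funext => i|]; case: (no_i i).
have x_fin i : x i \is a fin_num.
  rewrite fin_numE x_noy andbT; apply/negP => /eqP xi; move: dax.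
  rewrite (_ : ereal_inf _ = +oo) ?leye_eq //.
  apply/ereal_inf_pinfty => e [l [m [_ /(_ i) [_]]]].
  by rewrite xi addeNy /embv leeNy_eq.
exists (fun i => fine (x i)) => [|i j]; first by apply: funext => i; rewrite /embv fineK.
rewrite -lee_fin; apply: le_trans dax; apply/ereal_infP => _ [l [m [-> bounds]]].
have [+ _] := bounds i; have [_ +] := bounds j.
by rewrite /embv -(fineK (x_fin i)) -(fineK (x_fin j)) -!EFinD !lee_fin /=; lra.
Qed.

Lemma hilbert_d_le a (x : 'I_n -> R) r : (0 <= r)%R ->
  (forall i j, ((x i - a i) - (x j - a j) <= r)%R) -> hilbert_d (embv a) (embv x) <= r%:E.
Proof.
move=> r0 xa; rewrite /hilbert_d; case: asboolP => [_|not_bot]; first by rewrite lee_fin.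
have [i1 _] : exists i : 'I_n, True.
  apply: contrapT => no_i; apply: not_bot.
  by split; apply: funext => i; case: no_i; exists i.
pose d i := (a i - x i)%R.
have [imax _ dmax] := arg_maxP d (isT : predT i1).
have [imin _ dmin] := arg_minP d (isT : predT i1).
apply: ge_ereal_inf; exists (d imax - d imin)%:E.
  exists (d imax), (d imin); split => // i; rewrite /embv -!EFinD !lee_fin.
  by have := dmax i isT; have := dmin i isT; rewrite /d /=; split; lra.
by rewrite lee_fin /d; have := xa imin imax; lra.
Qed.
End HilbertMetric.

Section MinOrbit.
Variables (R : realType) (n : nat) (G : ('I_n -> \bar R) -> 'I_n -> \bar R).
Hypothesis G_mono : forall x y, (forall j, x j <= y j) -> forall i, G x i <= G y i.
Hypothesis G_shift : forall (c : R) x i, G (fun j => c%:E + x j) i = c%:E + G x i.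

Definition min_orbit (x : nat -> 'I_n -> R) (M : nat) (d : R) (i : 'I_n) : R :=
  \big[Num.min/x 0%N i]_(m < M) (x m i + m%:R * d)%R.

Lemma min_orbit_super (x : nat -> 'I_n -> R) M d :
  (forall m, G (embv (x m)) = embv (x m.+1)) -> (0 < M)%N ->
  (forall i, x M i <= x 0%N i - M%:R * d)%R ->
  forall i, G (embv (min_orbit x M d)) i <= (min_orbit x M d i - d)%:E.
Proof.
move=> x_orbit M0 xM i.
have G_le m : (m < M)%N -> G (embv (min_orbit x M d)) i <= (x m.+1 i + m%:R * d)%:E.
  move=> mM; have := G_mono (y := fun j => (m%:R * d)%:E + embv (x m) j) _ i.
  rewrite G_shift x_orbit /embv -EFinD addrC; apply=> j.
  by rewrite -EFinD lee_fin addrC; apply: (bigmin_le _ (Ordinal mM)).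
case: M M0 xM G_le => // M _ xM G_le.
case E: (G _ i) => [g| |]; last by rewrite leNye.
- have gx0 : (g + d <= x 0%N i)%R.
    have := G_le M (ltnSn _); have := xM i; rewrite E lee_fin -natr1 mulrDl mul1r.
    lra.
  rewrite lee_fin; suff : (g + d <= min_orbit x M.+1 d i)%R by lra.
  apply: le_bigmin => // -[[|m] mM] _ /=; first by rewrite mul0r addr0.
  have := G_le m (ltnW mM); rewrite E lee_fin -natr1 mulrDl mul1r; lra.
- by have := G_le 0%N (ltn0Sn _); rewrite E leye_eq.
Qed.
End MinOrbit.

Section CollatzWielandt.
Variables (R : realType) (n : nat) (S : ('I_n -> \bar R) -> 'I_n -> \bar R).
Hypothesis S_mono : forall x y, (forall j, x j <= y j) -> forall i, S x i <= S y i.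
Hypothesis S_shift : forall (c : R) x i, S (fun j => c%:E + x j) i = c%:E + S x i.

Definition cw_set : set R :=
  [set l | exists a : 'I_n -> R, forall i, S (embv a) i <= (l + a i)%:E].

Definition cw : \bar R := ereal_inf (EFin @` cw_set).

Lemma cw_set_up l l' : cw_set l -> (l <= l')%R -> cw_set l'.
Proof.
move=> [a Sa] ll'; exists a => i; apply: le_trans (Sa i) _.
by rewrite lee_fin lerD2r.
Qed.

Lemma cw_set_gt l : cw < l%:E -> cw_set l.
Proof.
by move=> /ereal_inf_lt[_ [l' cw_l' <-]]; rewrite lte_fin => /ltW; apply: cw_set_up.
Qed.

Lemma rho_le_cw_set l : cw_set l -> rho S <= l%:E.
Proof.
move=> [a Sa]; apply/ereal_supP => e [_ [u [u_noy [u_nbot Su]]]].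
have [i1 ui1] : exists i, u i != -oo.
  apply: contrapT => all_bot; apply: u_nbot; apply: funext => i.
  by apply/eqP/negPn/negP => ui; apply: all_bot; exists i.
have [i0 ui0 i0_max] :=
  @arg_maxP _ _ _ i1 (fun i => u i != -oo) (fun i => fine (u i) - a i)%R ui1.
set c := (fine (u i0) - a i0)%R.
have u_fin j : u j != -oo -> u j = (fine (u j))%:E.
  by move=> uj; rewrite fineK // fin_numE uj u_noy.
have u_le j : u j <= c%:E + embv a j.
  have [-> | uj] := eqVneq (u j) (-oo); first exact: leNye.
  by rewrite (u_fin j uj) /embv -EFinD lee_fin; have := i0_max j uj; rewrite /c /=; lra.
have := S_mono u_le i0; rewrite S_shift Su (u_fin i0 ui0).
have := Sa i0; clear Su; case: e => [e| |] // Sai0; rewrite ?leNye //.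
  move=> h; have := le_trans h (leeD2l c%:E Sai0).
  by rewrite -!EFinD !lee_fin /c; lra.
by move=> h; have := le_trans h (leeD2l c%:E Sai0); rewrite addye // -EFinD leye_eq.
Qed.

Hypothesis S_cont : forall x : nat -> 'I_n -> \bar R, (forall m j, x m.+1 j <= x m j) ->
  forall i (c : R), S (fun j => ereal_inf (range (x ^~ j))) i < c%:E ->
  exists m, S (x m) i < c%:E.

Section MinimalSuperEigenvector.
Variables (l : R) (a0 : 'I_n -> R).
Hypothesis a0_super : forall i, S (embv a0) i <= (l + a0 i)%:E.
Hypothesis l_min : forall l', cw_set l' -> (l <= l')%R.

(* The max with x - 1 keeps the decreasing orbit finite, as min_orbit_super
   requires, without creating fixed points that are not eigenvectors of S. *)
Let damped x i : \bar R := maxe (S x i - l%:E) (x i - 1%:E).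
Let orbit m := iter m damped (embv a0).
Let orbit_inf i := ereal_inf (range (orbit ^~ i)).

Lemma damped_mono x y : (forall j, x j <= y j) -> forall i, damped x i <= damped y i.
Proof.
by move=> xy i; apply: le_max2; [apply: leeD2r; apply: S_mono | apply: leeD2r].
Qed.

Lemma damped_shift (c : R) x i : damped (fun j => c%:E + x j) i = c%:E + damped x i.
Proof. by rewrite /damped S_shift adde_maxr !addeA. Qed.

Lemma orbit_decr m i : orbit m.+1 i <= orbit m i.
Proof.
elim: m i => [|m IH] i; last exact: (damped_mono IH).
rewrite /= /damped ge_max leeBlDr // -EFinD addrC a0_super /embv -EFinB lee_fin /=.
by rewrite gerBl ler01.
Qed.

Lemma orbit_le m m' i : (m <= m')%N -> orbit m' i <= orbit m i.
Proof. exact: (Order.NatMonotonyTheory.nonincnP (orbit_decr ^~ i)). Qed.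

Lemma orbit_fin m i : orbit m i \is a fin_num.
Proof.
elim: m i => [|m IH] i //; rewrite fin_numE.
have lb : orbit m i - 1%:E <= orbit m.+1 i by rewrite /= /damped le_max lexx orbT.
move: lb (orbit_decr m i); rewrite -(fineK (IH i)) -EFinB.
by case: (orbit m.+1 i) => [r| |] //; rewrite ?leye_eq ?leeNy_eq.
Qed.

Lemma orbit_inf_le m i : orbit_inf i <= orbit m i.
Proof. by apply: ereal_inf_lbound; exists m. Qed.

Lemma orbit_inf_neqy i : orbit_inf i != +oo.
Proof. by apply: contra_eq_neq (orbit_inf_le 0 i) => ->; rewrite leye_eq. Qed.

Lemma damped_cont i (c : R) :
  damped orbit_inf i < c%:E -> exists m, damped (orbit m) i < c%:E.
Proof.
rewrite /damped gt_max => /andP[Sw wi].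
have [m1 Sm1] : exists m, S (orbit m) i < (c + l)%:E.
  apply: S_cont => [m j|]; first exact: orbit_decr.
  by move: Sw; rewrite lteBlDr // EFinD.
have [_ [m2 _ <-] m2_lt] : exists2 y, range (orbit ^~ i) y & y < (c + 1)%:E.
  by apply: ereal_inf_lt; move: wi; rewrite lteBlDr // EFinD.
exists (maxn m1 m2); rewrite gt_max !lteBlDr // -!EFinD; apply/andP; split.
  by apply: le_lt_trans Sm1; apply: S_mono => j; apply: orbit_le; apply: leq_maxl.
by apply: le_lt_trans m2_lt; apply: orbit_le; apply: leq_maxr.
Qed.

Lemma orbit_inf_fixed i : damped orbit_inf i = orbit_inf i.
Proof.
apply/eqP; rewrite eq_le; apply/andP; split.
  apply/ereal_infP => _ [m _ <-]; apply: le_trans (orbit_decr m i).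
  exact: (damped_mono (orbit_inf_le m)).
rewrite leNgt; apply/negP => damped_lt.
have inf_fin : orbit_inf i \is a fin_num.
  rewrite fin_numE orbit_inf_neqy andbT.
  by apply: contraTneq damped_lt => ->; rewrite ltNge leNye.
have [m] : exists m, damped (orbit m) i < (fine (orbit_inf i))%:E.
  by apply: damped_cont; rewrite fineK.
by rewrite fineK // => /lt_le_trans /(_ (orbit_inf_le m.+1 i)); rewrite ltxx.
Qed.

Lemma orbit_inf_eigen : S orbit_inf = (fun i => l%:E + orbit_inf i).
Proof.
apply: funext => i; have := orbit_inf_fixed i; rewrite /damped.
have [-> | inf_ninf] := eqVneq (orbit_inf i) (-oo).
  move=> fixed; have : S orbit_inf i - l%:E <= -oo by rewrite -fixed le_max lexx.
  by rewrite leeNy_eq adde_eq_ninfty orbF addeNy => /eqP.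
have [r inf_r] : exists r, orbit_inf i = r%:E.
  by exists (fine (orbit_inf i)); rewrite fineK // fin_numE inf_ninf orbit_inf_neqy.
have r_gt : r%:E - 1%:E < r%:E by rewrite -EFinB lte_fin gtrBl ltr01.
rewrite inf_r; have [_ | _] := leP (S orbit_inf i - l%:E) (r%:E - 1%:E).
  by move=> r_eq; move: r_gt; rewrite r_eq ltxx.
by move=> <-; rewrite addeC subeK.
Qed.

Lemma orbit_inf_not_bot : orbit_inf <> @botv R n.
Proof.
move=> inf_bot.
have [mf mf_lt] : {mf : 'I_n -> nat & forall i, orbit (mf i) i < (a0 i - 1)%:E}.
  apply: (@choice _ _ (fun i m => orbit m i < (a0 i - 1)%:E)) => i.
  have : orbit_inf i < (a0 i - 1)%:E by rewrite inf_bot /botv ltNyr.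
  by move=> /ereal_inf_lt[_ [m _ <-] lt]; exists m.
pose M := (\max_i mf i).+1; pose d : R := (M%:R)^-1%R.
have d0 : (0 < d)%R by rewrite invr_gt0 ltr0n.
have Md : (M%:R * d = 1)%R by rewrite mulfV // pnatr_eq0.
pose x m i := fine (orbit m i).
have orbit_x m : orbit m = embv (x m).
  by apply: funext => i; rewrite /embv fineK // orbit_fin.
have xM i : (x M i <= x 0%N i - M%:R * d)%R.
  rewrite Md -lee_fin /x fineK ?orbit_fin //=; apply/ltW.
  apply: le_lt_trans (mf_lt i); apply: (orbit_le (m' := M)).
  by apply: leqW; apply: leq_bigmax.
have orbit_step m : damped (embv (x m)) = embv (x m.+1) by rewrite -!orbit_x.
have /l_min : cw_set (l - d)%R.
  exists (min_orbit x M d) => i.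
  have := min_orbit_super damped_mono damped_shift orbit_step (ltn0Sn _) xM i.
  rewrite /damped ge_max.
  case/andP => + _; rewrite leeBlDr // -EFinD => /le_trans; apply.
  by rewrite lee_fin /M; lra.
by lra.
Qed.

Lemma eigen_of_min_super :
  exists u, rmax_vec u /\ u <> @botv R n /\ S u = (fun i => l%:E + u i).
Proof.
exists orbit_inf; split; first exact: orbit_inf_neqy.
by split; [exact: orbit_inf_not_bot | exact: orbit_inf_eigen].
Qed.

End MinimalSuperEigenvector.

Lemma rho_eq_cw l0 : cw_set l0 ->
  (forall l, (forall e, (0 < e)%R -> cw_set (l + e)%R) -> cw_set l) -> rho S = cw.
Proof.
move=> cw_l0 cw_closed; apply/eqP; rewrite eq_le; apply/andP; split.
  by apply/ereal_infP => _ [l cw_l <-]; apply: rho_le_cw_set.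
case E: cw => [l| |]; last exact: leNye.
  have [a0 a0_super] : cw_set l.
    by apply: cw_closed => e e0; apply: cw_set_gt; rewrite E lte_fin ltrDl.
  have l_min l' : cw_set l' -> (l <= l')%R.
    by move=> cw_l'; rewrite -lee_fin -E; apply: ereal_inf_lbound; exists l'.
  have [u eigen_u] := eigen_of_min_super a0_super l_min.
  by apply: ereal_sup_ubound; split => //; exists u.
have : cw <= l0%:E by apply: ereal_inf_lbound; exists l0.
by rewrite E leye_eq.
Qed.
End CollatzWielandt.

Section TropicalOperator.
Variables (R : realType) (n p : nat) (V : 'I_n -> 'I_p -> \bar R).
Hypothesis V_neqy : forall i k, V i k != +oo.
Hypothesis V_row : forall i, exists k, V i k != -oo.
Local Notation T := (T_op V).

Definition T_col (x : 'I_n -> \bar R) i k :=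
  - V i k + \big[maxe/-oo]_(j < n | j != i) (V j k + x j).

Lemma V_fin i k : V i k != -oo -> V i k = (fine (V i k))%:E.
Proof. by move=> Vik; rewrite fineK // fin_numE Vik V_neqy. Qed.

Lemma T_op_le x i k : V i k != -oo -> T x i <= T_col x i k.
Proof. by move=> Vik; apply: ereal_inf_lbound; exists k. Qed.

Lemma T_op_attained x i : exists2 k, V i k != -oo & T x i = T_col x i k.
Proof.
have [k1 Vik1] := V_row i.
have [k Vik k_min] := @arg_minP _ _ _ k1 (fun k => V i k != -oo) (T_col x i) Vik1.
exists k => //; apply/eqP; rewrite eq_le T_op_le //=.
by apply/ereal_infP => _ [k' Vik' <-]; apply: k_min.
Qed.

Lemma T_col_leP x i k (v : R) (y : \bar R) : V i k = v%:E ->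
  T_col x i k <= y <-> (forall j, j != i -> V j k + x j <= y + v%:E).
Proof.
move=> Vik; rewrite /T_col Vik addeC leeBlDr //; split.
  by move=> /bigmax_leP[_ le_y] j /le_y.
by move=> le_y; apply/bigmax_leP; split; [exact: leNye | exact: le_y].
Qed.

Lemma T_op_mono x y : (forall j, x j <= y j) -> forall i, T x i <= T y i.
Proof.
move=> xy i; have [k Vik ->] := T_op_attained y i.
apply: le_trans (T_op_le x Vik) _; apply: leeD2l; apply: le_bigmax2 => j _.
exact: leeD2l.
Qed.

Lemma T_col_shift (c : R) x i k :
  T_col (fun j => c%:E + x j) i k = c%:E + T_col x i k.
Proof.
rewrite /T_col (eq_bigr (fun j => c%:E + (V j k + x j))) => [|j _]; last exact: addeCA.
by rewrite -(big_morph _ (adde_maxr c%:E) (addeNy c%:E)) addeCA.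
Qed.

Lemma T_op_shift (c : R) x i : T (fun j => c%:E + x j) i = c%:E + T x i.
Proof.
apply/eqP; rewrite eq_le; apply/andP; split.
  by have [k Vik ->] := T_op_attained x i; rewrite -T_col_shift T_op_le.
have [k Vik ->] := T_op_attained (fun j => c%:E + x j) i.
by rewrite T_col_shift leeD2l // T_op_le.
Qed.

Lemma T_op_cont (x : nat -> 'I_n -> \bar R) : (forall m j, x m.+1 j <= x m j) ->
  forall i (c : R), T (fun j => ereal_inf (range (x ^~ j))) i < c%:E ->
  exists m, T (x m) i < c%:E.
Proof.
move=> x_decr i c.
have [k Vik ->] := T_op_attained (fun j => ereal_inf (range (x ^~ j))) i.
rewrite /T_col (V_fin Vik); set v := fine (V i k).
rewrite addeC lteBlDr // => /bigmax_ltP[_ lt_cv].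
have [mf mf_lt] :
    {mf : 'I_n -> nat & forall j, j != i -> V j k + x (mf j) j < (c + v)%:E}.
  apply: (@choice _ _ (fun j m => j != i -> V j k + x m j < (c + v)%:E)) => j.
  have [Vjk | Vjk] := eqVneq (V j k) (-oo).
    by exists 0%N; rewrite Vjk addNye ltNyr.
  have [-> | ji] := eqVneq j i; first by exists 0%N.
  have Vjk_fin : V j k \is a fin_num by rewrite fin_numE Vjk V_neqy.
  move: (lt_cv j ji); rewrite addeC -lteBrDr // => /ereal_inf_lt[_ [m _ <-] lt].
  by exists m => _; rewrite addeC -lteBrDr.
exists (\max_j mf j); apply: le_lt_trans (T_op_le _ Vik) _.
rewrite /T_col (V_fin Vik) addeC lteBlDr //; apply/bigmax_ltP; split => [|j ji].
  exact: ltNyr.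
apply: le_lt_trans (mf_lt j ji); apply: leeD2l.
apply: (Order.NatMonotonyTheory.nonincnP (f := x ^~ j)) => [m|].
  exact: x_decr.
exact: leq_bigmax.
Qed.

(* For a policy s, choosing the column s i in the infimum defining T_i gives a
   max-plus linear map T_s >= T; these are the difference constraints that
   express T_s a <= l + e + a. *)
Definition policy_cons (l : R) (s : 'I_n -> 'I_p) : seq ('I_n * 'I_n * R) :=
  [seq (i, j, fine (V j (s i)) - fine (V i (s i)) - l)%R
     | i <- enum 'I_n, j <- [seq j <- enum 'I_n | (j != i) && (V j (s i) != -oo)]].

Lemma T_op_policyP (l e : R) (a : 'I_n -> R) :
  (forall i, T (embv a) i <= (l + e + a i)%:E) <->
  exists2 s : {ffun 'I_n -> 'I_p},
    (forall i, V i (s i) != -oo) & all (dc_sat e a) (policy_cons l s).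
Proof.
split => [Ta | [s s_fin s_sat] i].
  have [kf kf_spec] : {kf : 'I_n -> 'I_p &
      forall i, V i (kf i) != -oo /\ T (embv a) i = T_col (embv a) i (kf i)}.
    apply: (@choice _ _ (fun i k => V i k != -oo /\ T (embv a) i = T_col (embv a) i k)).
    by move=> i; have [k ? ?] := T_op_attained (embv a) i; exists k.
  exists [ffun i => kf i] => [i|]; first by rewrite ffunE; case: (kf_spec i).
  apply/all_allpairsP => i j _; rewrite mem_filter !ffunE => /andP[/andP[ji Vjk] _].
  have [Vik Ti] := kf_spec i; move: (Ta i); rewrite Ti.
  move=> /(T_col_leP _ _ (V_fin Vik)) /(_ j ji).
  by rewrite (V_fin Vjk) /embv -!EFinD lee_fin /dc_sat /=; lra.
apply: le_trans (T_op_le _ (s_fin i)) _.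
apply/(T_col_leP _ _ (V_fin (s_fin i))) => j ji.
have [-> | Vjk] := eqVneq (V j (s i)) (-oo); first by rewrite addNye leNye.
move/all_allpairsP: s_sat => /(_ i j); rewrite mem_enum mem_filter ji Vjk mem_enum.
by rewrite /dc_sat (V_fin Vjk) /embv -!EFinD lee_fin /=; move/(_ isT isT); lra.
Qed.

Lemma cw_set_T_op0 : cw_set T 0%R.
Proof.
have [s s_max] : {s : 'I_n -> 'I_p & forall i k, V i k <= V i (s i)}.
  apply: (@choice _ _ (fun i k0 => forall k, V i k <= V i k0)) => i.
  have [k1 _] := V_row i; have [k0 _ k0_max] := @arg_maxP _ _ _ k1 predT (V i) isT.
  by exists k0 => k; apply: k0_max.
have s_fin i : V i (s i) != -oo.
  have [k Vik] := V_row i; apply: contraNneq Vik => Vis.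
  by rewrite -leeNy_eq -Vis s_max.
exists (fun i => - fine (V i (s i)))%R => i; rewrite -[0%R]addr0.
apply: (T_op_policyP 0%R 0%R _).2; exists [ffun i => s i] => [j|]; first by rewrite ffunE.
apply/all_allpairsP => j j' _; rewrite mem_filter !ffunE => /andP[/andP[_ Vj's] _].
have := s_max j' (s j); rewrite (V_fin Vj's) (V_fin (s_fin j')) lee_fin /dc_sat /=.
lra.
Qed.

Lemma cw_set_T_op_closed l :
  (forall e, (0 < e)%R -> cw_set T (l + e)%R) -> cw_set T l.
Proof.
pose P (s : {ffun 'I_n -> 'I_p}) e :=
  (forall i, V i (s i) != -oo) /\ exists a, all (dc_sat e a) (policy_cons l s).
move=> approx; have [s s_unif] : exists s, forall e, (0 < e)%R -> P s e.
  apply: fin_uniform_witness => [s e e' /andP[_ ee'] [s_fin [a sat_a]]|e /approx[a Ta]].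
    by split=> //; exists a; apply: sub_all sat_a => c; apply: dc_satW.
  by have [s s_fin sat_a] := (T_op_policyP l e a).1 Ta; exists s; split=> //; exists a.
have [s_fin _] := s_unif 1%R ltr01.
have [a sat_a] : exists a, all (dc_sat 0%R a) (policy_cons l s).
  apply: (@dc_feasible _ _ (enum 'I_n)) => [|e /s_unif[_ //]].
  by apply/all_allpairsP => i j _ _; rewrite !mem_enum.
by exists a => i; rewrite -[l]addr0; apply: (T_op_policyP l 0%R a).2; exists s.
Qed.

Lemma rho_T_op : rho T = cw T.
Proof.
exact: (rho_eq_cw (@T_op_mono) T_op_shift (@T_op_cont) cw_set_T_op0
  (@cw_set_T_op_closed)).
Qed.

Lemma cw_T_op_le0 : cw T <= 0.
Proof. by apply: ereal_inf_lbound; exists 0%R => //; apply: cw_set_T_op0. Qed.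

Lemma T_op_hball_le b r : (0 <= r)%R -> hball b r%:E `<=` colspan V ->
  forall i, T (embv (fun j => - b j)%R) i <= (- b i - r)%:E.
Proof.
move=> r0 ball_sub i; pose x j := (b j + (if j == i then r else 0))%R.
have [y [y_noy xy]] : colspan V (embv x).
  apply: ball_sub; split => //; apply: hilbert_d_le => // j j'.
  by rewrite /x; case: (j == i); case: (j' == i); lra.
have [k1 _] := V_row i.
have [k _ max_k] := eq_bigmax k1 predT (fun k => V i k + y k) isT (fun _ _ => leNye _).
have Vy j : V j k + y k <= (x j)%:E.
  by rewrite -/(embv x j) xy; apply: le_bigmax.
have xi : (x i)%:E = V i k + y k by rewrite -/(embv x i) xy -max_k.
have [v Vik] : exists v, V i k = v%:E.
  by move: xi (V_neqy i k); case: (V i k) => [v| |] //; exists v.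
have [c yk] : exists c, y k = c%:E.
  by move: xi (y_noy k); rewrite Vik; case: (y k) => [c| |] //; exists c.
apply: le_trans (T_op_le _ (_ : V i k != -oo)) _; first by rewrite Vik.
apply/(T_col_leP _ _ Vik) => j ji.
move: (Vy j) xi; rewrite /x (negbTE ji) eqxx yk Vik /embv.
case: (V j k) => [u| |] //= +; rewrite ?leNye // !lee_fin -EFinD => uc [].
lra.
Qed.

Lemma cw_le_hball b (r : \bar R) : 0 <= r -> hball b r `<=` colspan V -> cw T <= - r.
Proof.
have cw_le_fin s : (0 <= s)%R -> hball b s%:E `<=` colspan V -> cw T <= (- s)%:E.
  move=> s0 ball_sub; apply: ereal_inf_lbound; exists (- s)%R => //.
  by exists (fun j => - b j)%R => i; rewrite addrC; apply: T_op_hball_le.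
case: r => [s| |] //; first by rewrite lee_fin; apply: cw_le_fin.
move=> _ ball_sub; suff -> : cw T = -oo by [].
apply: eq_ninfty => s; apply: le_trans (cw_le_fin `|s|%R _ _) _ => //.
  by move=> z [z_noy _]; apply: ball_sub; split => //; apply: leey.
by rewrite lee_fin; apply: lerNnormlW.
Qed.

Hypothesis V_col : forall k, exists i, V i k != -oo.

Definition residual (x : 'I_n -> R) k : \bar R :=
  \big[mine/+oo]_(i | V i k != -oo) ((x i)%:E - V i k).

Lemma residual_le x i k : V i k != -oo -> residual x k <= (x i)%:E - V i k.
Proof. by move=> Vik; apply: (bigmin_le_cond _ (fun i => (x i)%:E - V i k) Vik). Qed.

Lemma tmulv_residual_le x i : tmulv V (residual x) i <= (x i)%:E.
Proof.
apply/bigmax_leP; split => [|k _]; first exact: leNye.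
have [-> | Vik] := eqVneq (V i k) (-oo); first by rewrite addNye leNye.
by rewrite addeC -leeBrDr ?fin_numE ?Vik ?V_neqy ?residual_le.
Qed.

Lemma colspan_of_residual x :
  (forall i, exists k, (x i)%:E <= V i k + residual x k) -> colspan V (embv x).
Proof.
move=> attained; exists (residual x); split.
  move=> k; have [i Vik] := V_col k; apply: contra_eq_neq (residual_le x Vik) => ->.
  by rewrite (V_fin Vik) -EFinB leye_eq.
apply: funext => i; apply/eqP; rewrite eq_le tmulv_residual_le andbT.
by have [k xk] := attained i; apply: le_trans xk (le_bigmax _ _ k).
Qed.

Lemma hball_sub_colspan a r : (0 <= r)%R ->
  (forall i, T (embv a) i <= (a i - r)%:E) ->
  hball (fun i => - a i)%R r%:E `<=` colspan V `&` @fin_vecs R n.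
Proof.
move=> r0 Ta z [z_noy /hilbert_d_le_fin[//| x {z_noy}-> xa]].
split; last by move=> i.
apply: colspan_of_residual => i; have [k Vik Ti] := T_op_attained (embv a) i.
move: (Ta i); rewrite Ti => /(T_col_leP _ _ (V_fin Vik)) ak; exists k.
rewrite {1}(V_fin Vik) addeC -leeBlDr ?fin_numE ?Vik ?V_neqy //.
apply: le_bigmin => [|j Vjk]; first exact: leey.
rewrite (V_fin Vik) (V_fin Vjk) -!EFinB lee_fin.
have [-> | ji] := eqVneq j i; first lra.
move: (ak j ji) (xa i j); rewrite (V_fin Vjk) /embv -!EFinD lee_fin; lra.
Qed.

Lemma inrad_col_ge l : cw_set T l -> (l <= 0)%R -> (- l)%:E <= inrad_col V.
Proof.
move=> [a Ta] l0; apply: ereal_sup_ubound; split; first by rewrite lee_fin oppr_ge0.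
exists (fun i => - a i)%R => z /(hball_sub_colspan _ _) [] // => [|i].
  by rewrite oppr_ge0.
by rewrite opprK addrC.
Qed.

Lemma inrad_col_T_op : inrad_col V = - cw T.
Proof.
apply/eqP; rewrite eq_le; apply/andP; split.
  apply/ereal_supP => r [r0 [b ball_sub]]; rewrite leeNr.
  exact: (cw_le_hball r0 ball_sub).
rewrite /cw /ereal_inf oppeK; apply/ereal_supP => _ [_ [l cw_l <-] <-].
have [l0 | l_pos] := leP l 0%R; first exact: inrad_col_ge.
apply: le_trans (inrad_col_ge cw_set_T_op0 (lexx _)); rewrite lee_fin; lra.
Qed.

End TropicalOperator.

Unset Implicit Arguments.

Theorem theorem3p3 (R : realType) (n p : nat) (V : 'I_n -> 'I_p -> \bar R)
  (HV : forall i k, V i k != +oo)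
  (Hrow : forall i, exists k, V i k != -oo)
  (Hcol : forall k, exists i, V i k != -oo) :
  rho (T_op V) <= 0 /\
  - rho (T_op V) = inrad_col V /\
  (rho (T_op V) \is a fin_num ->
   forall a : 'I_n -> R,
     (forall i, T_op V (embv a) i <= rho (T_op V) + (a i)%:E) ->
     hball (fun i => - a i)%R (- rho (T_op V)) `<=` colspan V `&` @fin_vecs R n /\
     (forall (b : 'I_n -> R) (r : \bar R), 0 <= r ->
        hball b r `<=` colspan V -> r <= - rho (T_op V))).
Proof.
have rhoE := rho_T_op HV Hrow; have inradE := inrad_col_T_op HV Hrow Hcol.
have rho_le0 : rho (T_op V) <= 0 by rewrite rhoE; apply: cw_T_op_le0.
split=> //; split; first by rewrite rhoE inradE.
move=> rho_fin a Ta; split.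
  move: rho_fin rho_le0 Ta; case: (rho _) => [c| |] // _; rewrite lee_fin => c0 Ta.
  apply: hball_sub_colspan => // [|i]; first by rewrite oppr_ge0.
  by rewrite opprK addrC.
move=> b r r0 ball_sub; rewrite rhoE -inradE.
by apply: ereal_sup_ubound; split => //; exists b.
Qed.
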